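(* Let $(G,k)$ be an instance and $S\subseteq V$ with $|S|\le 4k$. If a large-dense vertex $v$ lies in a connected component of $G-S$ that is a tree, then every feasible solution contains $v$; consequently $(G,k)$ is a yes-instance iff $(G-v,k-1)$ is.
   Context: Graphs are undirected, without self-loops, possibly with multi-edges. $N(v)$ is the set of vertices adjacent to $v$; $\rho(v)$ is the number of unordered pairs $\{u_1,u_2\}\subseteq N(v)$ joined by at least one edge. A vertex $v$ is large-dense if $|N(v)|>7k$ and $\rho(v)> |N(v)|(|N(v)|-1)/4$. A vertex set induces a clique if between any two distinct vertices there is exactly one edge, and a tree if it is connected and acyclic (two parallel edges form a cycle). A feasible solution is $X\subseteq V$, $|X|\le k$, with every component of $G-X$ a clique or a tree. *)

(* A multigraph on a finite vertex type V is given by an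
   edge-multiplicity function m : V -> V -> nat (symmetric, loopless, checked
   by [multigraph]); the actual graph G is the subgraph induced on a vertex
   set W : {set V}, so that G - X is the graph on W :\: X. *)
From mathcomp Require Import all_boot.
Set Implicit Arguments. Unset Strict Implicit. Unset Printing Implicit Defensive.

Section Graphs.
Variable V : finType.
Variable m : V -> V -> nat.

Definition multigraph : Prop :=
  (forall x y, m x y = m y x) /\ (forall x, m x x = 0).

Definition adj (A : {set V}) : rel V :=
  fun a b => [&& a \in A, b \in A & 0 < m a b].

Definition nbhd (W : {set V}) (v : V) : {set V} :=
  [set u in W | 0 < m v u].

Definition rho (W : {set V}) (v : V) : nat :=
  #|[set P : {set V} | [&& P \subset nbhd W v, #|P| == 2 &
        [exists x in P, exists y in P, (x != y) && (0 < m x y)]]]|.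

Definition large_dense (W : {set V}) (k : nat) (v : V) : Prop :=
  7 * k < #|nbhd W v| /\
  #|nbhd W v| * (#|nbhd W v| - 1) < 4 * rho W v.

Definition component (A : {set V}) (x : V) : {set V} :=
  [set y | connect (adj A) x y].

Definition is_clique (C : {set V}) : Prop :=
  forall a b, a \in C -> b \in C -> a != b -> m a b = 1.

Definition connected_set (C : {set V}) : Prop :=
  C != set0 /\ forall a b, a \in C -> b \in C -> connect (adj C) a b.

(* acyclic: no 2-cycle (parallel edges) and no simple cycle of length >= 3 *)
Definition acyclic_set (C : {set V}) : Prop :=
  (forall a b, a \in C -> b \in C -> m a b <= 1) /\
  (forall p : seq V, 3 <= size p -> uniq p -> all (mem C) p ->
     ~ cycle (adj C) p).

Definition is_tree (C : {set V}) : Prop := connected_set C /\ acyclic_set C.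

Definition feasible (W : {set V}) (k : nat) (X : {set V}) : Prop :=
  [/\ X \subset W, #|X| <= k &
      forall x, x \in W :\: X ->
        is_clique (component (W :\: X) x) \/ is_tree (component (W :\: X) x)].

Definition yes_instance (W : {set V}) (k : nat) : Prop :=
  exists X, feasible W k X.

End Graphs.

From mathcomp Require Import all_boot.
From mathcomp Require Import zify.

(* Suppose a feasible X misses v, and look at the component of v in G - X.
   If it is a clique, it contains every neighbour of v outside X, and two
   neighbours outside X and S would close a triangle through v in the tree
   component of v in G - S; so |N(v)| <= |X| + |S| + 1 <= 5k + 1, against
   |N(v)| > 7k. If it is a tree, every edge inside N(v) has an endpoint in X,
   again because it would otherwise close a triangle through v, so
   rho(v) <= |X| |N(v)| <= k |N(v)|, against
   rho(v) > |N(v)| (|N(v)| - 1) / 4 >= 7k |N(v)| / 4. *)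

Section Multigraph.
Context {V : finType} {m : V -> V -> nat}.

Lemma mem_component (A : {set V}) (v : V) : v \in component m A v.
Proof. by rewrite inE connect0. Qed.

Lemma mem_component_adj {A : {set V}} {v a : V} :
  v \in A -> a \in A -> 0 < m v a -> a \in component m A v.
Proof. by move=> vA aA va; rewrite inE; apply: connect1; rewrite /adj vA aA va. Qed.

Lemma rho_le_cover (W X : {set V}) (v : V) :
  (forall x y, x \in nbhd m W v -> y \in nbhd m W v -> x != y -> 0 < m x y ->
     (x \in X) || (y \in X)) ->
  rho m W v <= #|X| * #|nbhd m W v|.
Proof.
move=> cover; rewrite -cardsX; apply: leq_trans (leq_imset_card (fun p => [set p.1; p.2]) _).
apply: subset_leq_card; apply/subsetP => P.
rewrite inE => /and3P [PN /eqP P2 /existsP [x /andP [xP]]].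
case/existsP => y /andP [yP /andP [xy mxy]].
have PE : P = [set x; y].
  apply/eqP; rewrite eq_sym eqEcard P2 cards2 xy andbT.
  by apply/subsetP => z; rewrite !inE => /orP [] /eqP ->.
have [xN yN] := (subsetP PN x xP, subsetP PN y yP).
case/orP: (cover x y xN yN xy mxy) => [xX | yX].
- by apply/imsetP; exists (x, y); rewrite ?in_setX ?xX.
- apply/imsetP; exists (y, x); first by rewrite in_setX yX xN.
  by rewrite PE setUC.
Qed.

Lemma rho_gt0_nbhd (W : {set V}) (v : V) : 0 < rho m W v -> 1 < #|nbhd m W v|.
Proof.
rewrite card_gt0 => /set0Pn [P]; rewrite inE => /and3P [PN /eqP P2 _].
by rewrite -P2 subset_leq_card.
Qed.

Lemma feasible_setD1 (W X : {set V}) (k : nat) (v : V) :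
  v \in X -> feasible m W k X -> feasible m (W :\ v) k.-1 (X :\ v).
Proof.
move=> vX [XW cardX comps]; have cardXv := cardsD1 v X; rewrite vX in cardXv.
split.
- by rewrite setSD.
- lia.
- by rewrite setDDl setD1K.
Qed.

Lemma feasible_setU1 (W X : {set V}) (k : nat) (v : V) :
  v \in W -> feasible m (W :\ v) k X -> feasible m W k.+1 (v |: X).
Proof.
move=> vW [XW cardX comps]; split; last by rewrite -setDDl.
- by rewrite subUset sub1set vW (subset_trans XW) ?subsetDl.
- by rewrite cardsU1; case: (v \notin X); lia.
Qed.

Hypothesis mg : multigraph m.

Lemma acyclic_triangle_free {C : {set V}} {a b c : V} :
  acyclic_set m C -> a \in C -> b \in C -> c \in C ->
  0 < m a b -> 0 < m b c -> 0 < m c a -> False.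
Proof.
case: mg => _ loopless [_ no_cycle] aC bC cC ab bc ca.
have neq x y : 0 < m x y -> x != y by move=> xy; apply: contraTneq xy => ->; rewrite loopless.
apply: (no_cycle [:: a; b; c]) => //=.
- by rewrite !inE negb_or (neq a b) ?(neq b c) 1?eq_sym ?(neq c a).
- by rewrite aC bC cC.
- by rewrite /adj aC bC cC ab bc ca.
Qed.

Lemma component_triangle_free {A : {set V}} {v a b : V} :
  acyclic_set m (component m A v) -> v \in A -> a \in A -> b \in A ->
  0 < m v a -> 0 < m v b -> 0 < m a b -> False.
Proof.
move=> acyc vA aA bA va vb ab.
have bv : 0 < m b v by case: mg => sym _; rewrite sym.
exact: (acyclic_triangle_free acyc (mem_component A v)
          (mem_component_adj vA aA va) (mem_component_adj vA bA vb) va ab bv).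
Qed.

Lemma clique_component_nbhd {W X S : {set V}} {v : V} :
  acyclic_set m (component m (W :\: S) v) -> v \in W :\: S -> v \in W :\: X ->
  is_clique m (component m (W :\: X) v) ->
  #|nbhd m W v :\: (X :|: S)| <= 1.
Proof.
move=> acyc vWS vWX clique; rewrite leqNgt; apply/card_gt1P => -[a [b [aN bN ab]]].
move: aN bN; rewrite !inE => /and3P [/norP [aX aS] aW va] /and3P [/norP [bX bS] bW vb].
have inWX x : x \notin X -> x \in W -> x \in W :\: X by rewrite inE => -> ->.
have mab := clique a b (mem_component_adj vWX (inWX a aX aW) va)
                       (mem_component_adj vWX (inWX b bX bW) vb) ab.
by apply: (component_triangle_free acyc vWS _ _ va vb); rewrite ?mab ?inE ?aS ?bS.
Qed.

Lemma tree_component_rho {W X : {set V}} {v : V} :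
  acyclic_set m (component m (W :\: X) v) -> v \in W :\: X ->
  rho m W v <= #|X| * #|nbhd m W v|.
Proof.
move=> acyc vWX; apply: rho_le_cover => x y xN yN _ xy.
apply/negPn/negP; rewrite negb_or => /andP [xX yX].
move: xN yN; rewrite !inE => /andP [xW vx] /andP [yW vy].
by apply: (component_triangle_free acyc vWX _ _ vx vy xy); rewrite inE ?xX ?yX.
Qed.

Lemma large_dense_mem_feasible {W S X : {set V}} {k : nat} {v : V} :
  #|S| <= 4 * k -> large_dense m W k v ->
  v \in W :\: S -> acyclic_set m (component m (W :\: S) v) ->
  feasible m W k X -> v \in X.
Proof.
move=> cardS [dense_nbhd dense_rho] vWS acyc [_ cardX comps].
apply/negPn/negP => vX; have vWX : v \in W :\: X by rewrite inE vX; case/setDP: vWS.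
case: (comps v vWX) => [clique | [_ acycX]].
- have small := clique_component_nbhd acyc vWS vWX clique.
  have := cardsU X S; rewrite cardsD in small.
  have := subset_leq_card (subsetIr (nbhd m W v) (X :|: S)).
  have : 1 < #|nbhd m W v| by apply: rho_gt0_nbhd; lia.
  lia.
- have := tree_component_rho acycX vWX.
  have : #|X| * #|nbhd m W v| <= k * #|nbhd m W v| by rewrite leq_mul2r cardX orbT.
  have : 4 * k * #|nbhd m W v| <= #|nbhd m W v| * (#|nbhd m W v| - 1).
    by rewrite mulnC leq_mul2l; apply/orP; right; lia.
  lia.
Qed.

End Multigraph.

Theorem mainTheorem10 (V : finType) (m : V -> V -> nat) (W S : {set V})
    (k : nat) (v : V) :
  multigraph m ->
  S \subset W -> #|S| <= 4 * k ->
  v \in W -> large_dense m W k v ->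
  v \in W :\: S -> is_tree m (component m (W :\: S) v) ->
  (forall X, feasible m W k X -> v \in X) /\
  (yes_instance m W k <-> (0 < k /\ yes_instance m (W :\ v) k.-1)).
Proof.
move=> mg _ cardS vW dense vWS [_ acyc].
have v_in_feasible X : feasible m W k X -> v \in X.
  exact: (large_dense_mem_feasible mg cardS dense vWS acyc).
split=> //; split.
- move=> [X feasX]; have vX := v_in_feasible X feasX.
  split; last by exists (X :\ v); apply: feasible_setD1.
  by case: feasX => _ cardX _; rewrite (leq_trans _ cardX) // card_gt0; apply/set0Pn; exists v.
- move=> [k_gt0 [X feasX]]; exists (v |: X).
  by rewrite -(prednK k_gt0); apply: feasible_setU1.
Qed.
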